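(* Fix $n\in\mathbb N$ and $x\in\mathbb P^d_K(\mathbb C_p)$, and let $C=\{U\in T_{O_K/\pi^n}(\Lambda^{(n)}):x\in Y_U\}$ with the induced order. If $C$ is nonempty, its order complex $C^\bullet$ is contractible.
   Context: $K$ finite over $\mathbb Q_p$, $O_K$, uniformizer $\pi$, $O$ the integers of $\mathbb C_p$, $\Lambda=\bigoplus_{i=0}^dO_Ke_i$, $\Lambda^{(n)}=\Lambda/\pi^n\Lambda$. For an $O_K/\pi^n$-submodule $U\subset\Lambda^{(n)}$ let $\mathrm{rk}(U)=\dim_{O_K/\pi}(U+\pi\Lambda^{(n)})/\pi\Lambda^{(n)}$ and $\mathrm{rk}'(U)$ the minimal number of generators. $T_{O_K/\pi^n}(\Lambda^{(n)})$ is the poset under inclusion of submodules $U$ with $\mathrm{rk}(U)\ge1$ and $\mathrm{rk}'(U)\le d$. For $x$ with line $L_x\subset\mathbb C_p^{d+1}$, $\mathrm{red}_n(x)=(L_x\cap(\Lambda\otimes O))\otimes O/\pi^nO$, and $Y_U=\{x:\mathrm{red}_n(x)\subset U\otimes_{O_K/\pi^n}O/\pi^nO\}$. The order complex of a poset has chains $x_0\prec\cdots\prec x_m$ as $m$-simplices. *)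

From HB Require Import structures.
From mathcomp Require Import all_boot all_order all_algebra.
From mathcomp Require Import all_classical all_reals all_analysis.
From mathcomp Require Import Rstruct Rstruct_topology.
Set Implicit Arguments. Unset Strict Implicit. Unset Printing Implicit Defensive.
Import Order.TTheory GRing.Theory Num.Theory.
Local Open Scope classical_set_scope.
Local Open Scope ring_scope.

Definition DVR_uniformizer (OK : idomainType) (pi : OK) : Prop :=
  pi != 0 /\ pi \notin GRing.unit /\
  forall a : OK, a != 0 -> exists (k : nat) (u : OK), u \is a GRing.unit /\ a = u * pi ^+ k.

Definition finite_residue (OK : idomainType) (pi : OK) : Prop :=
  exists s : seq OK, forall a : OK, exists2 b, b \in s & exists c, a - b = pi * c.

(* O is a valuation subring of C containing the (injective) image of O_K,
   in which pi is not a unit. *)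
Definition integers_ext (OK : idomainType) (pi : OK) (C : fieldType) (O : set C)
    (iota : {rmorphism OK -> C}) : Prop :=
  O 0 /\ O 1 /\ (forall a b, O a -> O b -> O (a - b)) /\ (forall a b, O a -> O b -> O (a * b)) /\
  (forall z, z != 0 -> O z \/ O z^-1) /\
  injective iota /\ (forall a, O (iota a)) /\ ~ O (iota pi)^-1.

(* A submodule U of Lambda^{(n)} = Lambda / pi^n Lambda is represented by its
   preimage in Lambda, i.e. an O_K-submodule of Lambda containing pi^n Lambda. *)
Definition is_submod (OK : idomainType) (d : nat) (U : set 'rV[OK]_(d.+1)) : Prop :=
  U 0 /\ (forall v w, U v -> U w -> U (v + w)) /\ (forall (a : OK) v, U v -> U (a *: v)).

Definition submod_n (OK : idomainType) (pi : OK) (d n : nat) (U : set 'rV[OK]_(d.+1)) : Prop :=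
  is_submod U /\ forall v, U (pi ^+ n *: v).

(* U / (a Lambda) (more precisely (U + a Lambda)/a Lambda) is generated by (the
   images of) m elements of U *)
Definition gen_mod (OK : idomainType) (d : nat) (a : OK) (U : set 'rV[OK]_(d.+1)) (m : nat) : Prop :=
  exists u : 'I_m -> 'rV[OK]_(d.+1), (forall i, U (u i)) /\
    forall v, U v -> exists (c : 'I_m -> OK) (r : 'rV[OK]_(d.+1)),
      v = \sum_(i < m) c i *: u i + a *: r.

(* rk(U) >= 1 : the O_K/pi-dimension of (U + pi Lambda^{(n)})/pi Lambda^{(n)},
   i.e. its minimal number of generators, is not 0 *)
Definition rk_ge1 (OK : idomainType) (pi : OK) (d : nat) (U : set 'rV[OK]_(d.+1)) : Prop :=
  ~ gen_mod pi U 0.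

(* rk'(U) <= d : U is generated by d elements as an O_K/pi^n-module *)
Definition rk'_le (OK : idomainType) (pi : OK) (d n : nat) (U : set 'rV[OK]_(d.+1)) (m : nat) : Prop :=
  gen_mod (pi ^+ n) U m.

Definition in_T (OK : idomainType) (pi : OK) (d n : nat) (U : set 'rV[OK]_(d.+1)) : Prop :=
  submod_n pi n U /\ rk_ge1 pi U /\ rk'_le pi n U d.

Definition inO (C : fieldType) (O : set C) (d : nat) (w : 'rV[C]_(d.+1)) : Prop :=
  forall i, O (w 0 i).

(* preimage in Lambda (x) O = O^{d+1} of U (x)_{O_K/pi^n} O/pi^n O, viewed (by
   flatness) as the image of U (x) O in (O/pi^n O)^{d+1} *)
Definition UO (OK : idomainType) (pi : OK) (C : fieldType) (O : set C)
    (iota : {rmorphism OK -> C}) (d n : nat) (U : set 'rV[OK]_(d.+1)) : set 'rV[C]_(d.+1) :=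
  [set w | exists (m : nat) (u : 'I_m -> 'rV[OK]_(d.+1)) (c : 'I_m -> C) (r : 'rV[C]_(d.+1)),
     [/\ (forall i, U (u i)), (forall i, O (c i)), inO O r &
         w = \sum_(i < m) c i *: map_mx iota (u i) + (iota pi) ^+ n *: r]].

(* x in Y_U, where x in P^d(C) is represented by a nonzero vector of C^{d+1}
   spanning the line L_x: red_n(x) = (L_x cap O^{d+1}) mod pi^n is contained in
   U (x) O/pi^n O. *)
Definition in_Y (OK : idomainType) (pi : OK) (C : fieldType) (O : set C)
    (iota : {rmorphism OK -> C}) (d n : nat) (U : set 'rV[OK]_(d.+1)) (x : 'rV[C]_(d.+1)) : Prop :=
  forall w : 'rV[C]_(d.+1), (exists c : C, w = c *: x) -> inO O w -> UO pi O iota n U w.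

Local Notation RR := Rdefinitions.R.

(* geometric realization of the order complex of the poset (P, le): the points
   are the finitely supported functions f : X -> [0,1] with sum 1 whose support
   is a (finite) chain of P; topology = subspace of the product topology
   (which is the usual topology for finite posets). *)
Definition order_complex_realization (X : Type) (P : set X) (le : X -> X -> Prop)
    : set {ptws X -> RR} :=
  [set f | exists (k : nat) (s : 'I_k -> X),
     injective s /\ (forall i, P (s i)) /\
     (forall i j, le (s i) (s j) \/ le (s j) (s i)) /\
     (forall a, f a <> 0 -> exists i, a = s i) /\
     (forall a, 0 <= f a) /\
     \sum_(i < k) f (s i) = 1].

Definition contractible (T : topologicalType) (A : set T) : Prop :=
  exists a : T, A a /\
  exists H : RR * T -> T,
    [/\ {within [set p | 0 <= p.1 <= 1 /\ A p.2], continuous H},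
        (forall t y, 0 <= t <= 1 -> A y -> A (H (t, y))),
        (forall y, A y -> H (0, y) = y) &
        (forall y, A y -> H (1, y) = a)].

From HB Require Import structures.
From mathcomp Require Import all_boot all_order all_algebra.
From mathcomp Require Import all_classical all_reals all_analysis.
From mathcomp Require Import Rstruct Rstruct_topology.
Import Order.TTheory GRing.Theory Num.Theory.
Local Open Scope classical_set_scope.
Local Open Scope ring_scope.
Set Implicit Arguments. Unset Strict Implicit. Unset Printing Implicit Defensive.

(* Proof idea: the poset C has a least element U0, so its order complex is a
   cone with apex U0 and contracts onto that vertex by the straight-line homotopy.
   C has a least element because it is closed under intersection and, since
   Lambda / pi^n Lambda is finite, a member containing the fewest residue classes
   lies in every other member.  For U, V in C: x stays in Y_(U cap V) because O is
   flat over the discrete valuation ring O_K (the equational criterion, obtained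
   from an entry of least valuation); rk'(U cap V) <= d because a submodule of a
   module generated by d elements over O_K / pi^n is again generated by d
   elements; and rk(U cap V) >= 1 because otherwise reducing the normalised
   representative of x would make pi invertible in O. *)

Section Submodules.
Variables (OK : idomainType) (d : nat).
Implicit Types (U V W : set 'rV[OK]_d.+1) (a : OK).

Lemma is_submod_setI U V : is_submod U -> is_submod V -> is_submod (U `&` V).
Proof.
move=> [U0 [UD UZ]] [V0 [VD VZ]]; split; first by [].
by split=> [v w [? ?] [? ?]|a v [? ?]]; split; [exact: UD|exact: VD|exact: UZ|exact: VZ].
Qed.

Lemma submod_n_setI (pi : OK) n U V :
  submod_n pi n U -> submod_n pi n V -> submod_n pi n (U `&` V).
Proof. by move=> [U_sub U_n] [V_sub V_n]; split=> [|v]; [exact: is_submod_setI | split]. Qed.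

Lemma submod_sum U m (F : 'I_m -> 'rV[OK]_d.+1) :
  is_submod U -> (forall i, U (F i)) -> U (\sum_(i < m) F i).
Proof. by move=> [U0 [UD _]] UF; apply: (big_ind U) => // i _; apply: UF. Qed.

Lemma submod_sub U v w : is_submod U -> U v -> U w -> U (v - w).
Proof. by move=> [_ [UD UZ]] Uv Uw; rewrite -scaleN1r; apply: UD => //; apply: UZ. Qed.

Lemma submod_row_mul U p m (M : 'M[OK]_(p, m)) (G : 'M[OK]_(m, d.+1)) :
  is_submod U -> (forall i, U (row i G)) -> forall i, U (row i (M *m G)).
Proof.
move=> U_sub UG i; rewrite row_mul mulmx_sum_row; apply: submod_sum => // j.
by case: U_sub => [_ [_ UZ]]; apply: UZ.
Qed.

Definition span_mod a m (u : 'I_m -> 'rV[OK]_d.+1) : set 'rV[OK]_d.+1 :=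
  [set w | exists (c : 'I_m -> OK) (r : 'rV[OK]_d.+1), w = \sum_(i < m) c i *: u i + a *: r].

Lemma is_submod_span_mod a m (u : 'I_m -> 'rV[OK]_d.+1) : is_submod (span_mod a u).
Proof.
split; first by exists (fun=> 0), 0; rewrite scaler0 addr0 big1 // => i _; rewrite scale0r.
split=> [_ _ [c [r ->]] [c' [r' ->]]|b _ [c [r ->]]].
  exists (fun i => c i + c' i), (r + r'); rewrite scalerDr addrACA -big_split /=.
  by congr (_ + _); apply: eq_bigr => i _; rewrite scalerDl.
exists (fun i => b * c i), (b *: r); rewrite scalerDr scaler_sumr scalerA mulrC -scalerA.
by congr (_ + _); apply: eq_bigr => i _; rewrite scalerA.
Qed.

Lemma span_mod_scale a m (u : 'I_m -> 'rV[OK]_d.+1) v : span_mod a u (a *: v).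
Proof. by exists (fun=> 0), v; rewrite big1 ?add0r // => i _; rewrite scale0r. Qed.

Lemma span_mod_ord0 a m (u : 'I_m.+1 -> 'rV[OK]_d.+1) w :
  span_mod a u w <->
  exists c0, span_mod a (fun i => u (lift ord0 i)) (w - c0 *: u ord0).
Proof.
split=> [[c [r ->]]|[c0 [c [r e]]]].
  exists (c ord0), (fun i => c (lift ord0 i)), r.
  by rewrite big_ord_recl addrAC [X in X + _ = _]addrC addKr.
exists (fun k => if unlift ord0 k is Some i then c i else c0), r.
rewrite big_ord_recl unlift_none.
under eq_bigr => i _ do rewrite liftK.
by rewrite -addrA -e addrC subrK.
Qed.

End Submodules.

Section DiscreteValuationRing.
Variables (OK : idomainType) (pi : OK).
Hypothesis pi_unif : DVR_uniformizer pi.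

Lemma dvr_dvd_all (S : set OK) : S !=set0 ->
  exists2 c0, S c0 & forall c, S c -> exists t, c = t * c0.
Proof.
move=> [c1 Sc1]; have [_ [_ pi_val]] := pi_unif.
have [[c Sc c_neq0]|all0] := pselect (exists2 c, S c & c != 0); last first.
  exists c1 => // c Sc; exists 0; rewrite mul0r.
  by have [//|c_neq0] := eqVneq c 0; case: all0; exists c.
pose has_val k := `[< exists c u, [/\ S c, u \is a GRing.unit & c = u * pi ^+ k] >].
have ex_val : exists k, has_val k.
  by have [k [u [uU cE]]] := pi_val c c_neq0; exists k; apply/asboolP; exists c, u.
have [k /asboolP [c0 [u [Sc0 uU c0E]]] k_min] := find_ex_minn ex_val.
exists c0 => // c' Sc'; rewrite c0E.
have [->|c'_neq0] := eqVneq c' 0; first by exists 0; rewrite mul0r.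
have [l [v [vU c'E]]] := pi_val c' c'_neq0.
have kl : (k <= l)%N by apply: k_min; rewrite /has_val; apply/asboolP; exists c', v.
rewrite c'E.
by exists (v / u * pi ^+ (l - k)); rewrite mulrACA divrK // -exprD subnK.
Qed.

Lemma dvr_dvd_family (m : nat) (f : 'I_m.+1 -> OK) :
  exists j, forall i, exists t, f i = t * f j.
Proof.
have [_ [j _ <-] f_min] := dvr_dvd_all (S := range f) (ex_intro _ _ (imageT f ord0)).
by exists j => i; apply: f_min; exists i.
Qed.

Lemma gen_mod_of_span_mod (d m : nat) (a : OK) (W : set 'rV[OK]_d.+1)
    (u : 'I_m -> 'rV[OK]_d.+1) :
  is_submod W -> (forall v, W (a *: v)) -> W `<=` span_mod a u -> gen_mod a W m.
Proof.
(* The last coordinates of the elements of W have a member c0 dividing all of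
   them; W is then generated by a witness w0 for c0 together with generators of
   the part of W spanned by the other u's. *)
elim: m u W => [|m IH] u W W_sub W_a W_span.
  by exists u; split=> // [[]].
have [_ [_ W_Z]] := W_sub.
pose u' i := u (lift ord0 i).
pose S cl := exists2 w, W w & span_mod a u' (w - cl *: u ord0).
have [c0 [w0 Ww0 w0_span] c0_dvd] :
    exists2 c0, S c0 & forall cl, S cl -> exists t, cl = t * c0.
  apply: dvr_dvd_all; exists 0, 0; first by case: W_sub.
  by rewrite scale0r subr0; case: (is_submod_span_mod a u').
pose W' := W `&` span_mod a u'.
have [h [W'h W'_span]] : gen_mod a W' m.
  apply: (IH u' W') => [||w []//].
  - exact: is_submod_setI W_sub (is_submod_span_mod _ _).
  - by move=> v; split; [apply: W_a | apply: span_mod_scale].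
pose h' k := if unlift ord0 k is Some i then h i else w0.
have h'_lift : (fun i => h' (lift ord0 i)) = h by apply/funext => i; rewrite /h' liftK.
have h'0 : h' ord0 = w0 by rewrite /h' unlift_none.
exists h'; split=> [k|v Wv].
  by rewrite /h'; case: unliftP => [i _|_]; [case: (W'h i) | ].
have [cl v_span] := (span_mod_ord0 a u v).1 (W_span v Wv).
have [t cl_t] := c0_dvd cl (ex_intro2 _ _ v Wv v_span).
apply/span_mod_ord0; exists t; rewrite h'_lift h'0.
apply: (W'_span (v - t *: w0)); split; first by apply: submod_sub => //; apply: W_Z.
have -> : v - t *: w0 = (v - cl *: u ord0) - t *: (w0 - c0 *: u ord0).
  by rewrite scalerBr scalerA -cl_t opprB addrA subrK.
have [_ [_ span_Z]] := is_submod_span_mod a u'.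
by apply: submod_sub => //; [exact: is_submod_span_mod | apply: span_Z].
Qed.

Variables (C : fieldType) (iota : {rmorphism OK -> C}).
Hypothesis iota_inj : injective iota.

Lemma flat_equational_col (m : nat) (al : 'cV[OK]_m) (c : 'rV[C]_m) :
  c *m map_mx iota al = 0 ->
  exists B : 'M[OK]_m, B *m al = 0 /\ c *m map_mx iota B = c.
Proof.
move=> c_al.
have [-> | al_neq0] := eqVneq al 0.
  by exists 1%:M; rewrite mul1mx map_mx1 mulmx1.
case: m al c c_al al_neq0 => [|m] al c c_al al_neq0.
  by rewrite flatmx0 eqxx in al_neq0.
(* With al j0 of least valuation, al = T * al j0 and 1 - T e_j0 kills al. *)
have [j0 /fin_all_exists [t tP]] := dvr_dvd_family (fun i => al i 0).
pose T : 'cV[OK]_m.+1 := \col_i t i.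
have alE : al = T *m row j0 al.
  by apply/matrixP => i k; rewrite (ord1 k) !mxE big_ord1 !mxE -tP.
have al_j0 : iota (al j0 0) != 0.
  rewrite raddf_eq0 //; apply: contra al_neq0 => /eqP al0.
  by rewrite alE; apply/eqP/matrixP => i k; rewrite (ord1 k) !mxE big_ord1 !mxE al0 mulr0.
have cT : c *m map_mx iota T = 0.
  have : (c *m map_mx iota T) *m map_mx iota (row j0 al) = 0.
    by rewrite -mulmxA -map_mxM -alE.
  move/matrixP/(_ 0 0); rewrite !mxE big_ord1 !mxE => /eqP.
  rewrite mulf_eq0 (negPf al_j0) orbF => /eqP cT0.
  by apply/matrixP => i k; rewrite !(ord1 i, ord1 k) !mxE cT0.
exists (1%:M - T *m delta_mx 0 j0); split.
  by rewrite mulmxBl mul1mx -mulmxA -rowE -alE subrr.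
by rewrite map_mxB map_mx1 map_mxM mulmxBr mulmx1 mulmxA cT mul0mx subr0.
Qed.

Lemma flat_equational (m N : nat) (A : 'M[OK]_(m, N)) (c : 'rV[C]_m) :
  c *m map_mx iota A = 0 ->
  exists B : 'M[OK]_m, B *m A = 0 /\ c *m map_mx iota B = c.
Proof.
elim: N A => [|N IH] A cA.
  by exists 1%:M; rewrite map_mx1 mulmx1 thinmx0.
pose A' : 'M[OK]_(m, 1 + N) := A.
have [B1 [B1A1 cB1]] :
    exists B1 : 'M[OK]_m, B1 *m lsubmx A' = 0 /\ c *m map_mx iota B1 = c.
  by apply: flat_equational_col; rewrite map_lsubmx mulmx_lsub cA linear0.
have [B2 [B2A2 cB2]] :
    exists B2 : 'M[OK]_m, B2 *m (B1 *m rsubmx A') = 0 /\ c *m map_mx iota B2 = c.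
  by apply: IH; rewrite map_mxM mulmxA cB1 map_rsubmx mulmx_rsub cA linear0.
exists (B2 *m B1); split; last by rewrite map_mxM mulmxA cB2 cB1.
rewrite -[A]/A' -[B2 *m B1 *m A']hsubmxK -mulmx_lsub -mulmx_rsub -!mulmxA B1A1 B2A2.
by rewrite mulmx0 row_mx0.
Qed.

End DiscreteValuationRing.

Lemma total_preorder_max (T : Type) (r : T -> T -> Prop)
    (r_total : forall a b, r a b \/ r b a)
    (r_trans : forall a b c, r a b -> r b c -> r a c) (m : nat) (f : 'I_m.+1 -> T) :
  exists j, forall i, r (f i) (f j).
Proof.
have r_refl a : r a a by case: (r_total a a).
elim: m f => [|m IH] f; first by exists ord0 => i; rewrite (ord1 i).
have [j' j'_max] := IH (fun i => f (lift ord0 i)).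
have [f0_le|f0_ge] := r_total (f ord0) (f (lift ord0 j')).
  by exists (lift ord0 j') => i; case: (unliftP ord0 i) => [i' ->|->].
exists ord0 => i; case: (unliftP ord0 i) => [i' ->|-> //].
exact: r_trans (j'_max i') f0_ge.
Qed.

Section Integers.
Variables (OK : idomainType) (pi : OK) (C : fieldType) (O : set C).
Variable iota : {rmorphism OK -> C}.
Hypothesis O_int : integers_ext pi O iota.

Lemma intO0 : O 0. Proof. by case: O_int. Qed.

Lemma intOB a b : O a -> O b -> O (a - b).
Proof. by case: O_int => _ [_ [OB _]]; exact: OB. Qed.

Lemma intOD a b : O a -> O b -> O (a + b).
Proof.
by move=> Oa Ob; rewrite -[b]opprK -[- b]sub0r; do 2?apply: intOB => //; exact: intO0.
Qed.

Lemma intOM a b : O a -> O b -> O (a * b).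
Proof. by case: O_int => _ [_ [_ [OM _]]]; exact: OM. Qed.

Lemma intO_iota a : O (iota a).
Proof. by case: O_int => _ [_ [_ [_ [_ [_ [Oi _]]]]]]; exact: Oi. Qed.

Lemma intO_sum m (F : 'I_m -> C) : (forall i, O (F i)) -> O (\sum_(i < m) F i).
Proof. by move=> OF; apply: (big_ind O) => [||i _]; [exact: intO0 | exact: intOD | ]. Qed.

Lemma iota_inj : injective iota.
Proof. by case: O_int => _ [_ [_ [_ [_ [inj _]]]]]. Qed.

Lemma exists_coord_dominant (d : nat) (x : 'rV[C]_d.+1) : x != 0 ->
  exists j, x 0 j != 0 /\ forall i, O (x 0 i / x 0 j).
Proof.
move=> x_neq0; have [_ [_ [_ [_ [valO _]]]]] := O_int.
pose r (z w : C) := exists2 c, O c & z = c * w.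
have r_total z w : r z w \/ r w z.
  have [->|z_neq0] := eqVneq z 0; first by left; exists 0; rewrite ?mul0r; first exact: intO0.
  have [->|w_neq0] := eqVneq w 0; first by right; exists 0; rewrite ?mul0r; first exact: intO0.
  have [Ozw|Owz] := valO (z / w) (mulf_neq0 z_neq0 (invr_neq0 w_neq0)).
    by left; exists (z / w); rewrite ?mulfVK.
  by right; exists (w / z); rewrite ?mulfVK // -invf_div.
have r_trans a b c : r a b -> r b c -> r a c.
  by move=> [s Os ->] [t Ot ->]; exists (s * t); rewrite ?mulrA //; exact: intOM.
have [j j_max] := total_preorder_max r_total r_trans (fun i => x 0 i).
have xj_neq0 : x 0 j != 0.
  apply: contra x_neq0 => /eqP xj0; apply/eqP/matrixP => a i; rewrite (ord1 a) mxE.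
  by have [c _ ->] := j_max i; rewrite xj0 mulr0.
by exists j; split=> // i; have [c Oc ->] := j_max i; rewrite mulfK.
Qed.

End Integers.

Section Reduction.
Variables (OK : idomainType) (pi : OK) (C : fieldType) (O : set C).
Variables (iota : {rmorphism OK -> C}) (d n : nat).
Hypotheses (pi_unif : DVR_uniformizer pi) (O_int : integers_ext pi O iota).
Implicit Types (U V W : set 'rV[OK]_d.+1).

Lemma UO_mulmx U m (G : 'M[OK]_(m, d.+1)) (c : 'rV[C]_m) :
  (forall p, U (row p G)) -> (forall p, O (c 0 p)) ->
  UO pi O iota n U (c *m map_mx iota G).
Proof.
move=> UG Oc; exists m, (fun p => row p G), (fun p => c 0 p), 0.
split=> //; first by move=> i; rewrite mxE; exact: intO0 O_int.
rewrite scaler0 addr0 mulmx_sum_row; apply: eq_bigr => p _.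
by congr (_ *: _); apply/matrixP => i j; rewrite !mxE.
Qed.

Lemma UO_mulmx_repr U w : submod_n pi n U -> UO pi O iota n U w ->
  exists m (G : 'M[OK]_(m, d.+1)) (c : 'rV[C]_m),
    [/\ forall p, U (row p G), forall p, O (c 0 p) & w = c *m map_mx iota G].
Proof.
move=> [_ U_n] [m [u [c [r [Uu Oc Or ->]]]]].
exists (m + d.+1)%N, (col_mx (\matrix_i u i) (pi ^+ n)%:M), (row_mx (\row_i c i) r).
split=> [p|p|].
- case: (split_ordP p) => j ->; first by rewrite rowKu rowK.
  by rewrite rowKd -scalemx1 linearZ; apply: U_n.
- by case: (split_ordP p) => j ->; rewrite ?row_mxEl ?row_mxEr ?mxE.
- rewrite map_col_mx mul_row_col map_scalar_mx mul_mx_scalar rmorphXn.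
  congr (_ + _); rewrite mulmx_sum_row; apply: eq_bigr => p _.
  by rewrite mxE; congr (_ *: _); apply/matrixP => i j; rewrite !mxE (ord1 i).
Qed.

Lemma UO_setI U V w : submod_n pi n U -> submod_n pi n V ->
  UO pi O iota n U w -> UO pi O iota n V w -> UO pi O iota n (U `&` V) w.
Proof.
move=> U_n V_n Uw Vw.
have [m1 [G1 [c1 [UG1 Oc1 w1]]]] := UO_mulmx_repr U_n Uw.
have [m2 [G2 [c2 [VG2 Oc2 w2]]]] := UO_mulmx_repr V_n Vw.
have c_G : row_mx c1 c2 *m map_mx iota (col_mx G1 (- G2)) = 0.
  by rewrite map_col_mx mul_row_col map_mxN mulmxN -w1 -w2 subrr.
have [B [BG cB]] := flat_equational pi_unif (iota_inj O_int) c_G.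
pose B' : 'M[OK]_(m1 + m2) := B.
have BG12 : lsubmx B' *m G1 = rsubmx B' *m G2.
  apply/eqP; rewrite -subr_eq0 -mulmxN -mul_row_col hsubmxK; exact/eqP.
have cBl : c1 = row_mx c1 c2 *m map_mx iota (lsubmx B').
  by rewrite map_lsubmx mulmx_lsub cB row_mxKl.
rewrite w1 cBl -mulmxA -map_mxM; apply: UO_mulmx => [p|p].
  split; first by apply: submod_row_mul => //; case: U_n.
  by rewrite BG12; apply: submod_row_mul => //; case: V_n.
by case: (split_ordP p) => j ->; rewrite ?row_mxEl ?row_mxEr.
Qed.

Lemma in_Y_rk_ge1 W x :
  submod_n pi n W -> in_Y pi O iota n W x -> x != 0 -> rk_ge1 pi W.
Proof.
move=> [W_sub W_n] Yx x_neq0 [u0 [_ W_pi]].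
have W_div v : W v -> exists r, v = pi *: r.
  by move=> Wv; have [c [r ->]] := W_pi v Wv; exists r; rewrite big_ord0 add0r.
have [pi_neq0 [pi_nunit _]] := pi_unif.
case: n W_n Yx => [|k] W_n Yx.
  have [r /matrixP/(_ 0 0)] := W_div _ (W_n (const_mx 1)).
  rewrite !mxE expr0 mul1r => r1; move/negP: pi_nunit; apply.
  by apply/GRing.unitrPr; exists (r 0 0).
(* As W lies in pi Lambda and n > 0, the multiple of x with j-th entry 1 lies in
   (iota pi) O^(d+1), which would put (iota pi)^-1 in O. *)
have [j [xj_neq0 x_dom]] := exists_coord_dominant O_int x_neq0.
have [|m [u [c [r [Wu Oc Or /matrixP/(_ 0 j) e]]]]] :=
  Yx ((x 0 j)^-1 *: x) (ex_intro _ _ erefl).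
  by move=> i; rewrite mxE mulrC; apply: x_dom.
have /fin_all_exists [ru ruE] i : exists r, u i = pi *: r := W_div _ (Wu i).
pose s := \sum_(i < m) c i * iota (ru i 0 j) + iota pi ^+ k * r 0 j.
have pi_s : iota pi * s = 1.
  move: e; rewrite !mxE mulVf // summxE => ->; rewrite mulrDr mulr_sumr exprS mulrA.
  congr (_ + _); apply: eq_bigr => i _.
  by rewrite !mxE ruE mxE rmorphM mulrCA.
have iota_pi : iota pi != 0 by rewrite raddf_eq0 //; exact: iota_inj O_int.
have [_ [_ [_ [_ [_ [_ [_ O_pi]]]]]]] := O_int; apply: O_pi.
rewrite -[_^-1]mulr1 -pi_s mulKf // /s; apply: (intOD O_int).
  by apply: (intO_sum O_int) => i; apply: (intOM O_int (Oc i) (intO_iota O_int _)).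
by rewrite -rmorphXn; apply: (intOM O_int (intO_iota O_int _) (Or j)).
Qed.

Lemma in_T_Y_setI U V x : x != 0 ->
  in_T pi n U /\ in_Y pi O iota n U x -> in_T pi n V /\ in_Y pi O iota n V x ->
  in_T pi n (U `&` V) /\ in_Y pi O iota n (U `&` V) x.
Proof.
move=> x_neq0 [[U_n [_ [u [_ U_span]]]] YU] [[V_n _] YV].
have UV_n := submod_n_setI U_n V_n.
have YUV : in_Y pi O iota n (U `&` V) x.
  by move=> w w_line w_int; apply: UO_setI U_n V_n (YU w _ _) (YV w _ _).
split=> //; split=> //; split; first exact: in_Y_rk_ge1 UV_n YUV x_neq0.
have [UV_sub UV_pin] := UV_n.
by apply: (gen_mod_of_span_mod pi_unif (u := u)) => // w [Uw _]; apply: U_span.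
Qed.

End Reduction.

Lemma count_subpred_eq (T : eqType) (a b : pred T) (s : seq T) :
  subpred a b -> count a s = count b s -> {in s, subpred b a}.
Proof.
move=> ab ab_count x xs bx.
have /allP : all a [seq y <- s | b y].
  rewrite all_count size_filter -ab_count count_filter.
  by apply/eqP/eq_count => y; apply/andb_idr/ab.
by apply; rewrite mem_filter bx.
Qed.

Section Residues.
Variables (OK : idomainType) (pi : OK) (d : nat).
Hypothesis residue_fin : finite_residue pi.

Lemma row_residue_reps : exists T : seq 'rV[OK]_d.+1,
  forall v, exists2 z, z \in T & exists r, v = z + pi *: r.
Proof.
have [s0 s0_rep] := residue_fin.
exists [seq \row_j ssval (f j) | f : {ffun 'I_d.+1 -> seq_sub s0}] => v.
have /fin_all_exists2 [b b_s0 /fin_all_exists [c vE]] j :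
    exists2 b, b \in s0 & exists c, v 0 j - b = pi * c := s0_rep (v 0 j).
exists (\row_j b j).
  have -> : \row_j b j = \row_j ssval ([ffun j => SeqSub (b_s0 j)] j).
    by apply/rowP => j; rewrite !mxE ffunE.
  exact: map_f (mem_enum _ _).
by exists (\row_j c j); apply/rowP => j; rewrite !mxE -vE addrC subrK.
Qed.

Lemma residue_reps n : exists S : seq 'rV[OK]_d.+1,
  forall v, exists2 s, s \in S & exists r, v = s + pi ^+ n *: r.
Proof.
have [T T_rep] := row_residue_reps.
elim: n => [|n [S S_rep]].
  by exists [:: 0] => v; exists 0; rewrite ?inE //; exists v; rewrite expr0 scale1r add0r.
exists [seq s + pi ^+ n *: z | s <- S, z <- T] => v.
have [s sS [r ->]] := S_rep v; have [z zT [r' ->]] := T_rep r.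
exists (s + pi ^+ n *: z); first exact: allpairs_f.
by exists r'; rewrite scalerDr scalerA -exprSr addrA.
Qed.

Lemma setI_closed_has_least n (CC : set (set 'rV[OK]_d.+1)) :
  CC !=set0 -> (forall U, CC U -> submod_n pi n U) ->
  (forall U V, CC U -> CC V -> CC (U `&` V)) ->
  exists2 U0, CC U0 & forall V, CC V -> U0 `<=` V.
Proof.
move=> [U1 CU1] CC_n CC_setI.
(* A member U0 containing the fewest residue representatives: U0 `&` V contains
   as many, hence the same ones, and they determine U0. *)
have [S S_rep] := residue_reps n.
pose mu (U : set 'rV[OK]_d.+1) := count (fun v => `[< U v >]) S.
have ex_mu : exists k, `[< exists2 U, CC U & mu U = k >].
  by exists (mu U1); apply/asboolP; exists U1.
have [_ /asboolP [U0 CU0 <-] mu_min] := find_ex_minn ex_mu.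
exists U0 => // V CV u U0u.
have U0V_U0 : subpred (fun v => `[< (U0 `&` V) v >]) (fun v => `[< U0 v >]).
  by move=> v /asboolP [U0v _]; apply/asboolP.
have mu_U0V : mu (U0 `&` V) = mu U0.
  apply/eqP; rewrite eqn_leq sub_count //=.
  by apply: mu_min; apply/asboolP; exists (U0 `&` V) => //; apply: CC_setI.
have [[U0_sub U0_n] [[_ [VD _]] V_n]] := (CC_n U0 CU0, CC_n V CV).
have [s sS [r uE]] := S_rep u.
have U0s : U0 s by rewrite -[s](addrK (pi ^+ n *: r)) -uE; apply: submod_sub.
have /asboolP [_ Vs] := count_subpred_eq U0V_U0 mu_U0V sS (introT (asboolP _) U0s).
by rewrite uE; apply: VD.
Qed.

End Residues.

Local Notation RR := Rdefinitions.R.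

Lemma ptws_continuous (X : Type) (T : topologicalType) (H : T -> {ptws X -> RR}) :
  (forall a, continuous (fun p => H p a)) -> continuous H.
Proof.
move=> H_cont p; apply/cvg_sup => a U [_ /= [[W W_open <-]] Wa] /filterS; apply.
exact/H_cont/open_nbhs_nbhs.
Qed.

Lemma segment_continuous (X : Type) (g : X -> RR) :
  continuous (fun p : RR * {ptws X -> RR} =>
    (fun a => (1 - p.1) * p.2 a + p.1 * g a) : {ptws X -> RR}).
Proof.
apply: ptws_continuous => a p.
have fst_cont : continuous (fun p : RR * {ptws X -> RR} => p.1) by move=> q; exact: cvg_fst.
have snd_a_cont : continuous (fun p : RR * {ptws X -> RR} => p.2 a).
  move=> q; apply: (@continuous_comp _ _ _ snd (fun f : {ptws X -> RR} => f a)).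
    exact: cvg_snd.
  exact: (@proj_continuous {classic X} (fun _ => RR) a).
apply: (@cvgD _ RR^o); apply: (@cvgM RR); [|exact: snd_a_cont|exact: fst_cont|exact: cvg_cst].
by apply: (@cvgB _ RR^o); [exact: cvg_cst | exact: fst_cont].
Qed.

Section OrderComplexCone.
Variables (X : Type) (P : set X) (le : X -> X -> Prop) (x0 : X).
Hypotheses (P_x0 : P x0) (x0_least : forall y, P y -> le x0 y).

Let delta (a : X) : RR := if `[< a = x0 >] then 1 else 0.

Let delta_x0 : delta x0 = 1. Proof. by rewrite /delta asboolT. Qed.

Let delta_neq a : a <> x0 -> delta a = 0. Proof. by move=> a_neq; rewrite /delta asboolF. Qed.

Let delta_ge0 a : 0 <= delta a. Proof. by rewrite /delta; case: asboolP. Qed.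

Lemma realization_vertex : order_complex_realization P le delta.
Proof.
exists 1%N, (fun=> x0); split; first by move=> i j _; rewrite (ord1 i) (ord1 j).
do 2!split=> //; first by move=> i j; left; apply: x0_least.
split; first by move=> a; rewrite /delta; case: asboolP => // -> _; exists ord0.
by split=> //; rewrite big_ord1 delta_x0.
Qed.

Lemma realization_chain_through_x0 (f : X -> RR) :
  order_complex_realization P le f ->
  exists k (s : 'I_k -> X), [/\ injective s, forall i, P (s i),
    forall i j, le (s i) (s j) \/ le (s j) (s i),
    forall a, f a <> 0 \/ a = x0 -> exists i, a = s i & \sum_(i < k) f (s i) = 1].
Proof.
move=> [k [s [s_inj [Ps [s_chain [f_supp [_ f_sum]]]]]]].
have [[i0 s_i0]|x0_out] := pselect (exists i, s i = x0).
  exists k, s; split=> // a [/f_supp //|->]; by exists i0.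
have f_x0 : f x0 = 0.
  by apply: contrapT => /f_supp [i x0E]; apply: x0_out; exists i.
pose s' i := if unlift ord0 i is Some j then s j else x0.
have s'_lift j : s' (lift ord0 j) = s j by rewrite /s' liftK.
have s'_0 : s' ord0 = x0 by rewrite /s' unlift_none.
exists k.+1, s'; split.
- move=> i j; rewrite /s'.
  case: (unliftP ord0 i) => [i' ->|->]; case: (unliftP ord0 j) => [j' ->|->] //.
  + by move/s_inj ->.
  + by move=> e; case: x0_out; exists i'.
  + by move=> e; case: x0_out; exists j'.
- by move=> i; rewrite /s'; case: unliftP.
- move=> i j; rewrite /s'.
  case: (unliftP ord0 i) => [i' _|_]; case: (unliftP ord0 j) => [j' _|_] //;
    by [right; apply: x0_least | left; apply: x0_least].
- move=> a [/f_supp [j ->]|->]; last by exists ord0.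
  by exists (lift ord0 j); rewrite s'_lift.
- rewrite big_ord_recl s'_0 f_x0 add0r.
  by under eq_bigr => i _ do rewrite s'_lift.
Qed.

Lemma realization_segment (f : X -> RR) (t : RR) :
  order_complex_realization P le f -> 0 <= t <= 1 ->
  order_complex_realization P le (fun a => (1 - t) * f a + t * delta a).
Proof.
move=> Rf /andP [t_ge0 t_le1].
have [k [s [s_inj Ps s_chain s_supp f_sum]]] := realization_chain_through_x0 Rf.
have [_ [_ [_ [_ [_ [_ [f_ge0 _]]]]]]] := Rf.
have [i0 x0E] := s_supp x0 (or_intror erefl).
exists k, s; do 3!split=> //; split.
  move=> a g_neq0; apply: s_supp; have [->|a_neq] := pselect (a = x0); first by right.
  by left => f_a; apply: g_neq0; rewrite f_a delta_neq // !mulr0 addr0.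
split; first by move=> a; rewrite addr_ge0 // mulr_ge0 // subr_ge0.
rewrite big_split /= -!mulr_sumr f_sum (bigD1 i0) //= -x0E delta_x0 big1 ?addr0.
  by rewrite mulr1 mulr1 subrK.
by move=> i i_neq; rewrite delta_neq ?mulr0 // x0E => /s_inj /eqP; rewrite (negPf i_neq).
Qed.

Lemma order_complex_least_contractible : contractible (order_complex_realization P le).
Proof.
exists delta; split; first exact: realization_vertex.
exists (fun p : RR * {ptws X -> RR} =>
  (fun a => (1 - p.1) * p.2 a + p.1 * delta a) : {ptws X -> RR}).
split.
- by apply: continuous_subspaceT; exact: segment_continuous.
- by move=> t f t01 Rf; exact: realization_segment.
- by move=> f _; apply/funext => a /=; rewrite subr0 mul1r mul0r addr0.
- by move=> f _; apply/funext => a /=; rewrite subrr mul0r add0r mul1r.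
Qed.

End OrderComplexCone.

Theorem mainTheorem13 (OK : idomainType) (pi : OK) (C : fieldType) (O : set C)
    (iota : {rmorphism OK -> C}) (d n : nat) (x : 'rV[C]_(d.+1)) :
  DVR_uniformizer pi -> finite_residue pi -> integers_ext pi O iota -> x != 0 ->
  let CC := [set U : set 'rV[OK]_(d.+1) | in_T pi n U /\ in_Y pi O iota n U x] in
  CC !=set0 ->
  contractible (order_complex_realization CC (fun U V => U `<=` V)).
Proof.
move=> pi_unif residue_fin O_int x_neq0 CC CC_ne.
have [U0 CU0 U0_least] : exists2 U0, CC U0 & forall V, CC V -> U0 `<=` V.
  apply: (setI_closed_has_least (n := n) residue_fin CC_ne) => [U [[]] //|].
  by move=> U V; apply: (in_T_Y_setI (n := n) pi_unif O_int x_neq0).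
exact: order_complex_least_contractible CU0 U0_least.
Qed.
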